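(* Let $G=A\star_C B$ be an amalgamated free product and let $g=x_{-r}x_{-r+1}\cdots x_0\cdots x_{r-1}x_r$ be a reduced word in $G$ with $r\ge1$, where $x_i\in A\setminus C$ for all $i\equiv r\pmod 2$ and $x_i\in B\setminus C$ otherwise. Suppose $x_{-r}$ and $x_r$ are both $2$-RF rel $C$ (in $A$), and $x_0$ is $n$-RTF rel $C$ (in its factor) for some $2\le n\le\infty$. Then $g\in G\setminus B$ is $n$-RF rel $B$.
   Context: For a group $G$, subgroup $D$, and $2\le n\le\infty$: $a\in G\setminus D$ is $n$-RF rel $D$ if $a^{e_1}d_1\cdots a^{e_k}d_k\ne\mathrm{id}$ for all $k\ge1$, $e_i\in\{\pm1\}$, $d_i\in D$ such that $d_i\ne\mathrm{id}$ whenever $e_i=-e_{i+1}$ (indices mod $k$), and fewer than $n$ of the $e_i$ are $+1$ and fewer than $n$ are $-1$. $a\in G\setminus D$ is $n$-RTF rel $D$ if $ad_1ad_2\cdots ad_k\ne\mathrm{id}$ for all $d_i\in D$ and $1\le k<n$. *)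

From Stdlib Require Import List Arith Lia.
Import ListNotations.
Set Implicit Arguments.

Record group := Group {
  gcar :> Type;
  gmul : gcar -> gcar -> gcar;
  ginv : gcar -> gcar;
  gone : gcar;
  gmulA : forall x y z, gmul x (gmul y z) = gmul (gmul x y) z;
  gmul1 : forall x, gmul gone x = x;
  gmulV : forall x, gmul (ginv x) x = gone
}.

Arguments gmul {g}. Arguments ginv {g}. Arguments gone {g}.

Definition is_subgroup {G : group} (H : G -> Prop) : Prop :=
  H gone /\ (forall x y, H x -> H y -> H (gmul x y)) /\ (forall x, H x -> H (ginv x)).

Definition gprod {G : group} (s : list G) : G := fold_right gmul gone s.

(** G is the (internal) amalgamated free product A *_C B:
    A, B, C subgroups, C = A ∩ B, G generated by A ∪ B, and every nonempty
    reduced word (alternating between A\C and B\C) is nontrivial. *)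
Definition reduced_word {G : group} (A B C : G -> Prop) (s : list G) : Prop :=
  (forall i, i < length s ->
     (A (nth i s gone) /\ ~ C (nth i s gone)) \/ (B (nth i s gone) /\ ~ C (nth i s gone))) /\
  (forall i, S i < length s ->
     (A (nth i s gone) <-> ~ A (nth (S i) s gone))).

Definition amalgamated_free_product {G : group} (A B C : G -> Prop) : Prop :=
  is_subgroup A /\ is_subgroup B /\ is_subgroup C /\
  (forall x, C x <-> (A x /\ B x)) /\
  (forall g : G, exists s : list G, (forall x, In x s -> A x \/ B x) /\ g = gprod s) /\
  (forall s : list G, s <> [] -> reduced_word A B C s -> gprod s <> gone).

(** Extended naturals: [None] stands for infinity. *)
Definition lt_ext (k : nat) (n : option nat) : Prop :=
  match n with None => True | Some m => k < m end.
Definition le_ext (k : nat) (n : option nat) : Prop :=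
  match n with None => True | Some m => k <= m end.

Definition gpow_sign {G : group} (a : G) (e : bool) : G := if e then a else ginv a.

(** a^{e_1} d_1 ... a^{e_k} d_k, where l = [(e_1,d_1); ...; (e_k,d_k)],
    e_i = true meaning +1 and false meaning -1. *)
Definition rf_word {G : group} (a : G) (l : list (bool * G)) : G :=
  fold_right (fun p acc => gmul (gmul (gpow_sign a (fst p)) (snd p)) acc) gone l.

Definition n_RF {G : group} (n : option nat) (D : G -> Prop) (a : G) : Prop :=
  ~ D a /\
  forall l : list (bool * G),
    1 <= length l ->
    (forall i, i < length l -> D (snd (nth i l (true, gone)))) ->
    (forall i, i < length l ->
        fst (nth i l (true, gone)) = negb (fst (nth ((S i) mod length l) l (true, gone))) ->
        snd (nth i l (true, gone)) <> gone) ->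
    lt_ext (length (filter (fun p => fst p) l)) n ->
    lt_ext (length (filter (fun p => negb (fst p)) l)) n ->
    rf_word a l <> gone.

Definition n_RTF {G : group} (n : option nat) (D : G -> Prop) (a : G) : Prop :=
  ~ D a /\
  forall ds : list G,
    1 <= length ds -> lt_ext (length ds) n ->
    (forall d, In d ds -> D d) ->
    fold_right (fun d acc => gmul (gmul a d) acc) gone ds <> gone.

(* Write g = L x_0 R with L = x_{-r} ... x_{-1} and R = x_1 ... x_r.  Conjugating a
   cyclic word g^{e_1} b_1 ... g^{e_k} b_k by L or R^-1 regroups it as
   x_0^{e_1} J_1 ... x_0^{e_k} J_k, where the junction J_i is b_i wrapped between R or
   L^-1 on the left and L or R^-1 on the right.  Cancelling from the inside out, each
   junction lies in C or is "long": it has a reduced form beginning and ending in the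
   factor not containing x_0.  At a sign change the innermost layer is x_r b x_r^-1 or
   x_{-r}^-1 b x_{-r} with b <> 1, which 2-RF keeps out of C, so the junction is long.
   Between long junctions, equal signs are glued by elements of C into runs
   x_0^e c_1 x_0^e ... c_m x_0^e with m < n, which lie outside C by n-RTF.  Rotating the
   cyclic word to end at a long junction therefore yields a nonempty reduced word; if
   no junction is long, all signs agree and the word is nontrivial by n-RTF itself. *)

From Stdlib Require Import List Arith Lia Bool Classical.
Import ListNotations.
Set Implicit Arguments.

Local Infix "**" := gmul (at level 40, left associativity).

Section GroupFacts.
Context {G : group}.
Implicit Types x y z c : G.

Lemma mulgA x y z : x ** (y ** z) = x ** y ** z.
Proof. apply gmulA. Qed.

Lemma mul1g x : gone ** x = x.
Proof. apply gmul1. Qed.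

Lemma mulVg x : ginv x ** x = gone.
Proof. apply gmulV. Qed.

Lemma mulgV x : x ** ginv x = gone.
Proof.
  rewrite <- (mul1g (x ** ginv x)), <- (mulVg (ginv x)) at 1.
  rewrite <- mulgA, (mulgA (ginv x) x), mulVg, mul1g. apply mulVg.
Qed.

Lemma mulg1 x : x ** gone = x.
Proof. rewrite <- (mulVg x), mulgA, mulgV, mul1g. reflexivity. Qed.

Lemma mulKg x y : ginv x ** (x ** y) = y.
Proof. rewrite mulgA, mulVg, mul1g. reflexivity. Qed.

Lemma mulgKV x y : y ** ginv x ** x = y.
Proof. rewrite <- mulgA, mulVg, mulg1. reflexivity. Qed.

Lemma mulgI x y z : x ** y = x ** z -> y = z.
Proof. intros E. rewrite <- (mulKg x y), E, mulKg. reflexivity. Qed.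

Lemma invg_unique x y : x ** y = gone -> y = ginv x.
Proof. intros E. rewrite <- (mulKg x y), E, mulg1. reflexivity. Qed.

Lemma invgK x : ginv (ginv x) = x.
Proof. symmetry. apply invg_unique, mulVg. Qed.

Lemma invMg x y : ginv (x ** y) = ginv y ** ginv x.
Proof.
  symmetry. apply invg_unique.
  rewrite mulgA, <- (mulgA x y), mulgV, mulg1, mulgV. reflexivity.
Qed.

Lemma invg1 : ginv (@gone G) = gone.
Proof. symmetry. apply invg_unique, mul1g. Qed.

Lemma mulg_eq1C x y : x ** y = gone -> y ** x = gone.
Proof. intros E. apply invg_unique in E. subst. apply mulVg. Qed.

Lemma conjg_eq1 x c : x ** c ** ginv x = gone -> c = gone.
Proof.
  intros E. apply (mulgI x). rewrite mulg1.
  rewrite <- (mulgKV x (x ** c)), E, mul1g. reflexivity.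
Qed.

Lemma gprod_app (s t : list G) : gprod (s ++ t) = gprod s ** gprod t.
Proof.
  induction s as [|y s IH]; simpl.
  - rewrite mul1g. reflexivity.
  - rewrite IH, mulgA. reflexivity.
Qed.

Lemma gprod_map {T : Type} (f : T -> G) (l : list T) :
  gprod (map f l) = fold_right (fun t acc => f t ** acc) gone l.
Proof. induction l as [|t l IH]; simpl; [|rewrite IH]; reflexivity. Qed.

Lemma invg_gprod (l : list G) : ginv (gprod l) = gprod (rev (map ginv l)).
Proof.
  induction l as [|y l IH]; simpl.
  - apply invg1.
  - rewrite invMg, IH, gprod_app. simpl. rewrite mulg1. reflexivity.
Qed.

Lemma gprod_map_mulg_rot y c (l : list G) :
  gprod (map (fun d => d ** y) (c :: l)) = c ** gprod (map (gmul y) l) ** y.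
Proof.
  revert c. induction l as [|d l IH]; intros c; simpl in *.
  - rewrite !mulg1. reflexivity.
  - rewrite IH, !mulgA. reflexivity.
Qed.

Lemma gprod_telescope (H K F F' : nat -> G) m len :
  (forall i, F i = H i ** K i) -> (forall i, F' i = K i ** H (S i)) ->
  gprod (map F (seq m len)) ** H (m + len) = H m ** gprod (map F' (seq m len)).
Proof.
  intros HF HF'. revert m. induction len as [|len IH]; intros m; simpl.
  - rewrite Nat.add_0_r, mul1g, mulg1. reflexivity.
  - rewrite <- mulgA, <- Nat.add_succ_comm, IH, HF, HF', !mulgA. reflexivity.
Qed.

Fixpoint lprod (u : nat -> G) (j : nat) : G :=
  match j with 0 => gone | S j => u j ** lprod u j end.

Fixpoint rprod (v : nat -> G) (j : nat) : G :=
  match j with 0 => gone | S j => rprod v j ** v j end.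

Lemma invg_lprod u j : ginv (lprod u j) = rprod (fun i => ginv (u i)) j.
Proof. induction j as [|j IH]; simpl; [apply invg1|]. rewrite invMg, IH. reflexivity. Qed.

Lemma invg_rprod v j : ginv (rprod v j) = lprod (fun i => ginv (v i)) j.
Proof. induction j as [|j IH]; simpl; [apply invg1|]. rewrite invMg, IH. reflexivity. Qed.

Lemma gprod_map_seq0 (x : nat -> G) j : gprod (map x (seq 0 j)) = rprod x j.
Proof.
  induction j as [|j IH]; [reflexivity|].
  rewrite seq_S, map_app, gprod_app, IH. simpl. rewrite mulg1. reflexivity.
Qed.

Lemma gprod_map_seqS (x : nat -> G) m j :
  gprod (map x (seq (S m) j)) = lprod (fun i => x (m + j - i)) j.
Proof.
  revert m. induction j as [|j IH]; intros m; [reflexivity|].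
  simpl. rewrite IH, Nat.add_succ_r.
  replace (S (m + j) - j) with (S m) by lia. reflexivity.
Qed.

End GroupFacts.

Definition wprod {G : group} (a : bool -> G) (w : list (bool * G)) : G :=
  gprod (map (fun p => a (fst p) ** snd p) w).

Definition nsign {T : Type} (s : bool) (w : list (bool * T)) : nat :=
  length (filter (fun p => if s then fst p else negb (fst p)) w).

Definition window {T : Type} (E : nat -> bool) (J : nat -> T) (m len : nat) :=
  map (fun i => (E i, J i)) (seq m len).

Section Words.
Context {G : group}.
Implicit Types (y c : G) (a : bool -> G) (w : list (bool * G)).

Lemma wprod_app a w1 w2 : wprod a (w1 ++ w2) = wprod a w1 ** wprod a w2.
Proof. unfold wprod. rewrite map_app. apply gprod_app. Qed.

Lemma rf_wordE y l : rf_word y l = wprod (gpow_sign y) l.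
Proof. unfold wprod. rewrite gprod_map. reflexivity. Qed.

Lemma wprod_window a E (J : nat -> G) m len :
  wprod a (window E J m len) = gprod (map (fun i => a (E i) ** J i) (seq m len)).
Proof. unfold wprod, window. rewrite map_map. reflexivity. Qed.

Lemma gpow_sign_negb y e : gpow_sign y (negb e) = ginv (gpow_sign y e).
Proof. destruct e; simpl; [|rewrite invgK]; reflexivity. Qed.

End Words.

Lemma nsign_app {T : Type} s (w1 w2 : list (bool * T)) :
  nsign s (w1 ++ w2) = nsign s w1 + nsign s w2.
Proof. unfold nsign. rewrite filter_app. apply length_app. Qed.

Lemma nsign_window {T U : Type} s E (J : nat -> T) (J' : nat -> U) m len :
  nsign s (window E J m len) = nsign s (window E J' m len).
Proof.
  unfold nsign, window. induction (seq m len) as [|i l IH]; [reflexivity|].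
  simpl. destruct s, (E i); simpl; rewrite ?IH; reflexivity.
Qed.

Lemma nsign_cons_eq {T : Type} e (t : T) w : nsign e ((e, t) :: w) = S (nsign e w).
Proof. destruct e; reflexivity. Qed.

Lemma nsign_cons_le {T : Type} s (p : bool * T) w : nsign s w <= nsign s (p :: w).
Proof. unfold nsign. destruct s, p as [[] t]; simpl; lia. Qed.

Lemma nsign_const {T : Type} e (J : nat -> T) l :
  nsign e (map (fun i => (e, J i)) l) = length l.
Proof.
  induction l as [|i l IH]; [reflexivity|].
  unfold nsign in *. simpl. destruct e; simpl; rewrite IH; reflexivity.
Qed.

Lemma lt_ext_le k k' n : lt_ext k n -> k' <= k -> lt_ext k' n.
Proof. destruct n; simpl; lia. Qed.

Lemma window_app {T : Type} E (J : nat -> T) m p q :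
  window E J m (p + q) = window E J m p ++ window E J (m + p) q.
Proof. unfold window. rewrite seq_app. apply map_app. Qed.

Section Periodic.
Context {T : Type}.
Variables (E : nat -> bool) (J : nat -> T) (k : nat).
Hypothesis HE : forall i, E (i + k) = E i.
Hypothesis HJ : forall i, J (i + k) = J i.

Lemma window_periodic m len : window E J (m + k) len = window E J m len.
Proof.
  revert m. induction len as [|len IH]; intros m; [reflexivity|].
  unfold window in *. simpl. rewrite HE, HJ. f_equal. apply (IH (S m)).
Qed.

Lemma window_rot j : j <= k ->
  exists w1 w2, window E J 0 k = w1 ++ w2 /\ window E J j k = w2 ++ w1.
Proof.
  intros Hj. exists (window E J 0 j), (window E J j (k - j)). split.
  - replace k with (j + (k - j)) at 1 by lia. apply window_app.
  - replace k with ((k - j) + j) at 1 by lia. rewrite window_app.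
    replace (j + (k - j)) with (0 + k) by lia. rewrite window_periodic. reflexivity.
Qed.

End Periodic.

Lemma mod_add_period i k : (i + k) mod k = i mod k.
Proof. rewrite <- (Nat.mul_1_l k) at 1. apply Nat.Div0.mod_add. Qed.

Section CyclicExtension.
Context {G : group}.
Variable l : list (bool * G).

(* The default [(true, gone)] of [nth] is only reached when [l = []]. *)
Definition cyc_sign (i : nat) : bool := fst (nth (i mod length l) l (true, gone)).
Definition cyc_elt (i : nat) : G := snd (nth (i mod length l) l (true, gone)).

Lemma window_cyc : window cyc_sign cyc_elt 0 (length l) = l.
Proof.
  apply (nth_ext _ _ (true, gone) (true, gone)).
  - unfold window. rewrite length_map. apply length_seq.
  - intros i Hi. unfold window in Hi. rewrite length_map, length_seq in Hi.
    unfold window. rewrite (nth_indep _ _ (cyc_sign 0, cyc_elt 0))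
      by (rewrite length_map, length_seq; assumption).
    rewrite (map_nth (fun i => (cyc_sign i, cyc_elt i))), seq_nth by assumption.
    unfold cyc_sign, cyc_elt. rewrite Nat.mod_small by assumption.
    symmetry. apply surjective_pairing.
Qed.

Lemma cyc_sign_periodic i : cyc_sign (i + length l) = cyc_sign i.
Proof. unfold cyc_sign. rewrite mod_add_period. reflexivity. Qed.

Lemma cyc_elt_periodic i : cyc_elt (i + length l) = cyc_elt i.
Proof. unfold cyc_elt. rewrite mod_add_period. reflexivity. Qed.

Lemma cyc_elt_in (P : G -> Prop) : l <> [] ->
  (forall i, i < length l -> P (snd (nth i l (true, gone)))) -> forall i, P (cyc_elt i).
Proof.
  intros Hl HP i. apply HP, Nat.mod_upper_bound.
  destruct l; [contradiction | discriminate].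
Qed.

Lemma cyc_elt_neq1 : l <> [] ->
  (forall i, i < length l ->
     fst (nth i l (true, gone)) = negb (fst (nth (S i mod length l) l (true, gone))) ->
     snd (nth i l (true, gone)) <> gone) ->
  forall i, cyc_sign i <> cyc_sign (S i) -> cyc_elt i <> gone.
Proof.
  intros Hl Hne i Hi. apply Hne.
  - apply Nat.mod_upper_bound. destruct l; [contradiction | discriminate].
  - unfold cyc_sign in Hi.
    replace (S (i mod length l)) with (i mod length l + 1) by lia.
    rewrite Nat.Div0.add_mod_idemp_l, Nat.add_1_r.
    destruct (fst (nth (i mod length l) l (true, gone))),
      (fst (nth (S i mod length l) l (true, gone))); simpl; congruence.
Qed.

End CyclicExtension.

Section RelativeFreeness.
Context {G : group}.
Variable D : G -> Prop.
Hypothesis HD : is_subgroup D.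

Lemma rtf_fold (y : G) ds :
  fold_right (fun d acc => gmul (gmul y d) acc) gone ds = gprod (map (gmul y) ds).
Proof. symmetry. apply gprod_map. Qed.

Lemma n_RTF_run_notin n y ds : n_RTF n D y -> (forall d, In d ds -> D d) ->
  lt_ext (S (length ds)) n -> ~ D (gprod (map (gmul y) ds) ** y).
Proof.
  intros [_ Hy] Hds Hn Hz. destruct HD as (_ & _ & HDinv).
  apply (Hy (ds ++ [ginv (gprod (map (gmul y) ds) ** y)])).
  - rewrite length_app. simpl. lia.
  - rewrite length_app, Nat.add_1_r. assumption.
  - intros d Hd. apply in_app_or in Hd.
    destruct Hd as [Hd | [<- | []]]; auto.
  - rewrite rtf_fold, map_app, gprod_app. simpl. rewrite mulg1, mulgA. apply mulgV.
Qed.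

(* Inverting [y^-1 d_1 ... y^-1 d_k] and rotating gives [y d_(k-1)^-1 ... y d_1^-1 y d_k^-1]. *)
Lemma n_RTF_inv n y : n_RTF n D y -> n_RTF n D (ginv y).
Proof.
  intros [Hy Hword]. destruct HD as (_ & _ & HDinv). split.
  - intros Hy'. apply Hy. rewrite <- (invgK y). auto.
  - intros ds Hlen Hn Hds Hprod. rewrite rtf_fold in Hprod.
    apply (f_equal ginv) in Hprod.
    rewrite invg_gprod, invg1, map_map, <- map_rev in Hprod.
    assert (Hds' : forall d, In d (rev ds) -> D (ginv d))
      by (intros d Hd; apply HDinv, Hds, in_rev, Hd).
    assert (Hlen' : length (rev ds) = length ds) by apply length_rev.
    rewrite (map_ext _ (fun d => ginv d ** y)) in Hprod
      by (intros d; rewrite invMg, invgK; reflexivity).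
    destruct (rev ds) as [|c l]; [simpl in Hlen'; lia|].
    rewrite <- (map_map ginv (fun d => d ** y)) in Hprod.
    change (map ginv (c :: l)) with (ginv c :: map ginv l) in Hprod.
    rewrite gprod_map_mulg_rot in Hprod.
    apply (Hword (map ginv l ++ [ginv c])).
    + rewrite length_app. simpl. lia.
    + rewrite length_app, length_map. simpl in Hlen' |- *. rewrite Nat.add_1_r, Hlen'. assumption.
    + intros d Hd. apply in_app_or in Hd. rewrite in_map_iff in Hd.
      destruct Hd as [(d' & <- & Hd') | [<- | []]]; apply Hds'; simpl; auto.
    + rewrite rtf_fold, map_app, gprod_app. simpl. rewrite mulg1, !mulgA.
      apply mulg_eq1C. rewrite !mulgA. assumption.
Qed.

(* Otherwise [t := y^e c y^-e] would give the forbidden 2-RF word [y^e c y^-e t^-1]. *)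
Lemma n_RF2_conj_notin y c e : n_RF (Some 2) D y -> D c -> c <> gone ->
  ~ D (gpow_sign y e ** c ** gpow_sign y (negb e)).
Proof.
  intros [_ Hy] Hc Hc1 Ht. destruct HD as (_ & _ & HDinv).
  set (t := gpow_sign y e ** c ** gpow_sign y (negb e)) in *.
  apply (Hy [(e, c); (negb e, ginv t)]).
  - simpl. lia.
  - intros [|[|i]] Hi; simpl in *; auto. lia.
  - intros [|[|i]] Hi; simpl in *.
    + intros _. assumption.
    + intros _ Ht1. apply Hc1, (conjg_eq1 (gpow_sign y e)).
      rewrite <- gpow_sign_negb. change (t = gone).
      rewrite <- (invgK t), Ht1. apply invg1.
    + lia.
  - destruct e; simpl; lia.
  - destruct e; simpl; lia.
  - rewrite rf_wordE. unfold wprod. simpl. rewrite mulg1, !mulgA. apply mulgV.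
Qed.

Lemma rf_words_notin n y : le_ext 2 n ->
  (forall l : list (bool * G),
    1 <= length l ->
    (forall i, i < length l -> D (snd (nth i l (true, gone)))) ->
    (forall i, i < length l ->
        fst (nth i l (true, gone)) = negb (fst (nth ((S i) mod length l) l (true, gone))) ->
        snd (nth i l (true, gone)) <> gone) ->
    lt_ext (length (filter (fun p => fst p) l)) n ->
    lt_ext (length (filter (fun p => negb (fst p)) l)) n ->
    rf_word y l <> gone) ->
  ~ D y.
Proof.
  intros Hn Hwords Hy. destruct HD as (_ & _ & HDinv).
  apply (Hwords [(true, ginv y)]); simpl.
  - lia.
  - intros [|i] Hi; simpl; [auto | lia].
  - intros [|i] Hi Hsign; [discriminate Hsign | lia].
  - destruct n; simpl in *; [lia | exact I].
  - destruct n; simpl in *; [lia | exact I].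
  - rewrite mulg1. apply mulgV.
Qed.

End RelativeFreeness.

Section Amalgam.
Context {G : group}.
Variables A B C : G -> Prop.
Hypothesis HG : amalgamated_free_product A B C.

Definition factor (s : bool) : G -> Prop := if s then A else B.
Definition letter (s : bool) (y : G) : Prop := factor s y /\ ~ C y.

Lemma C_subgroup : is_subgroup C.
Proof. destruct HG as (_ & _ & HC & _). exact HC. Qed.

Lemma factor_mul s y z : factor s y -> factor s z -> factor s (y ** z).
Proof. destruct HG as ((_ & HA & _) & (_ & HB & _) & _). destruct s; simpl; auto. Qed.

Lemma factor_inv s y : factor s y -> factor s (ginv y).
Proof. destruct HG as ((_ & _ & HA) & (_ & _ & HB) & _). destruct s; simpl; auto. Qed.

Lemma C_factor s y : C y -> factor s y.
Proof.
  destruct HG as (_ & _ & _ & HAB & _). intros Hy.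
  apply HAB in Hy. destruct s; apply Hy.
Qed.

Lemma letter_inv s y : letter s y -> letter s (ginv y).
Proof.
  intros [Hy HyC]. split; [apply factor_inv, Hy|].
  intros HC. apply HyC. rewrite <- (invgK y). apply C_subgroup, HC.
Qed.

Lemma letter_alternate s y z : letter s y -> letter (negb s) z -> (A y <-> ~ A z).
Proof.
  destruct HG as (_ & _ & _ & HAB & _). intros [Hy HyC] [Hz HzC].
  destruct s; simpl in *; split; intros H.
  - intros Hz'. apply HzC, HAB. auto.
  - assumption.
  - exfalso. apply HyC, HAB. auto.
  - contradiction.
Qed.

Inductive alt_word : bool -> bool -> list G -> Prop :=
  | alt_word1 s y : letter s y -> alt_word s s [y]
  | alt_word_cons s t y w : letter s y -> alt_word (negb s) t w -> alt_word s t (y :: w).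

Lemma alt_word_app s t u w1 w2 :
  alt_word s t w1 -> alt_word (negb t) u w2 -> alt_word s u (w1 ++ w2).
Proof. intros H1 H2. induction H1; simpl; constructor; auto. Qed.

Lemma alt_word_head s t w : alt_word s t w -> exists y w', w = y :: w' /\ letter s y.
Proof. intros H. destruct H; eauto. Qed.

Lemma alt_word_reduced s t w : alt_word s t w -> reduced_word A B C w.
Proof.
  assert (Hletter : forall s y, letter s y -> (A y /\ ~ C y) \/ (B y /\ ~ C y))
    by (intros [] y [Hy HyC]; auto).
  intros H. induction H as [s y Hy | s t y w Hy Hw [IH1 IH2]]; split.
  - intros [|i] Hi; simpl in *; [eauto | lia].
  - simpl. lia.
  - intros [|i] Hi; simpl in *; [eauto | apply IH1; lia].
  - intros [|i] Hi; simpl in *.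
    + destruct (alt_word_head Hw) as (z & w' & -> & Hz).
      exact (letter_alternate Hy Hz).
    + apply IH2. lia.
Qed.

Lemma alt_word_neq1 s t w : alt_word s t w -> gprod w <> gone.
Proof.
  intros H. destruct HG as (_ & _ & _ & _ & _ & Hfree). apply Hfree.
  - destruct H; discriminate.
  - exact (alt_word_reduced H).
Qed.

Definition alt_elt (s : bool) (y : G) : Prop := exists w, alt_word s s w /\ gprod w = y.

Lemma alt_elt_letter s y : letter s y -> alt_elt s y.
Proof. intros Hy. exists [y]. split; [constructor; exact Hy | apply mulg1]. Qed.

Lemma alt_elt_conj s t y z :
  alt_elt (negb s) t -> letter s y -> letter s z -> alt_elt s (y ** t ** z).
Proof.
  intros (w & Hw & <-) Hy Hz. exists (y :: w ++ [z]). split.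
  - constructor; [exact Hy|]. apply (alt_word_app Hw).
    rewrite negb_involutive. constructor. exact Hz.
  - simpl. rewrite gprod_app. simpl. rewrite mulg1, !mulgA. reflexivity.
Qed.

Lemma C_or_alt_conj s t y z :
  C t \/ alt_elt (negb s) t -> letter s y -> letter s z ->
  C (y ** t ** z) \/ alt_elt s (y ** t ** z).
Proof.
  intros [Ht | Ht] Hy Hz; [|right; apply alt_elt_conj; assumption].
  destruct (classic (C (y ** t ** z))) as [HC | HC]; [left; exact HC|].
  right. apply alt_elt_letter. split; [|exact HC].
  apply factor_mul; [apply factor_mul|]; [apply Hy | apply C_factor, Ht | apply Hz].
Qed.

Definition sandwich (u v : nat -> G) (b : G) (j : nat) : G := lprod u j ** b ** rprod v j.

Lemma sandwichS (u v : nat -> G) b j :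
  sandwich u v b (S j) = u j ** sandwich u v b j ** v j.
Proof. unfold sandwich. simpl. rewrite !mulgA. reflexivity. Qed.

Lemma sandwich_C_or_alt (u v : nat -> G) b j : B b ->
  (forall i, i < j -> letter (Nat.even i) (u i) /\ letter (Nat.even i) (v i)) ->
  C (sandwich u v b j) \/ alt_elt (Nat.odd j) (sandwich u v b j).
Proof.
  intros Hb Huv. induction j as [|j IH].
  - unfold sandwich. simpl. rewrite mul1g, mulg1.
    destruct (classic (C b)) as [HC | HC]; [left | right]; auto.
    apply alt_elt_letter. split; assumption.
  - rewrite sandwichS, Nat.odd_succ. destruct (Huv j) as [Hu Hv]; [lia|].
    apply C_or_alt_conj; [rewrite Nat.negb_even; apply IH; auto | exact Hu | exact Hv].
Qed.

Lemma sandwich_alt (u v : nat -> G) b j : 0 < j -> B b -> b <> gone ->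
  (forall c, C c -> c <> gone -> ~ C (u 0 ** c ** v 0)) ->
  (forall i, i < j -> letter (Nat.even i) (u i) /\ letter (Nat.even i) (v i)) ->
  alt_elt (Nat.odd j) (sandwich u v b j).
Proof.
  intros Hj Hb Hb1 Hconj. destruct j as [|j]; [lia|]. clear Hj.
  induction j as [|j IH]; intros Huv.
  - unfold sandwich. simpl. rewrite mulg1, mul1g.
    destruct (Huv 0) as [[Hu HuC] [Hv HvC]]; [lia|].
    destruct (classic (C b)) as [HC | HC].
    + apply alt_elt_letter. split; [|exact (Hconj b HC Hb1)].
      apply factor_mul; [apply factor_mul|]; [exact Hu | apply C_factor, HC | exact Hv].
    + exists [u 0; b; v 0]. split.
      * apply alt_word_cons; [split; assumption|].
        apply alt_word_cons; [split; assumption|].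
        apply alt_word1. split; assumption.
      * simpl. rewrite mulg1, !mulgA. reflexivity.
  - rewrite sandwichS, Nat.odd_succ. destruct (Huv (S j)) as [Hu Hv]; [lia|].
    apply alt_elt_conj; [|exact Hu | exact Hv].
    rewrite Nat.negb_even. apply IH. intros i Hi. apply Huv. lia.
Qed.

Section CyclicProducts.
Variables (X : bool) (a : bool -> G) (n : option nat).
Hypothesis Ha : forall e, factor X (a e).
Hypothesis Hrtf : forall e, n_RTF n C (a e).

Inductive chain : bool -> list (bool * G) -> Prop :=
  | chain1 e t : alt_elt (negb X) t -> chain e [(e, t)]
  | chain_cut e e' t w : alt_elt (negb X) t -> chain e' w -> chain e ((e, t) :: w)
  | chain_merge e c w : C c -> chain e w -> chain e ((e, c) :: w).

Lemma run_factor e ds : (forall d, In d ds -> C d) -> factor X (gprod (map (gmul (a e)) ds)).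
Proof.
  induction ds as [|d ds IH]; intros Hds; simpl.
  - apply C_factor, (proj1 C_subgroup).
  - apply factor_mul; [apply factor_mul|]; [apply Ha | apply C_factor, Hds | apply IH].
    + left. reflexivity.
    + intros d' Hd'. apply Hds. right. exact Hd'.
Qed.

Lemma run_letter e ds : (forall d, In d ds -> C d) -> lt_ext (S (length ds)) n ->
  letter X (gprod (map (gmul (a e)) ds) ** a e).
Proof.
  intros Hds Hn. split.
  - apply factor_mul; [apply run_factor, Hds | apply Ha].
  - exact (n_RTF_run_notin C_subgroup ds (Hrtf e) Hds Hn).
Qed.

(* Each run [a e] c_1 ... [a e] c_m [a e] with the c_i in C is one letter of factor [X]
   ([run_letter]), and runs are separated by long junctions. *)
Lemma chain_alt_word e w ds : chain e w -> (forall d, In d ds -> C d) ->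
  lt_ext (length ds + nsign e w) n -> (forall s, lt_ext (nsign s w) n) ->
  exists u, alt_word X (negb X) u /\ gprod u = gprod (map (gmul (a e)) ds) ** wprod a w.
Proof.
  intros Hw. revert ds.
  induction Hw as [e t Ht | e e' t w Ht Hw IH | e c w Hc Hw IH];
    intros ds Hds Hrun Hcnt; rewrite ?nsign_cons_eq in Hrun.
  - destruct Ht as (wt & Hwt & <-).
    exists (gprod (map (gmul (a e)) ds) ** a e :: wt). split.
    + constructor; [apply run_letter; [exact Hds | apply (lt_ext_le _ Hrun); lia] | exact Hwt].
    + unfold wprod. simpl. rewrite mulg1, !mulgA. reflexivity.
  - destruct Ht as (wt & Hwt & <-).
    destruct (IH []) as (u & Hu & Hgu).
    + simpl. tauto.
    + apply (lt_ext_le _ (Hcnt e')), nsign_cons_le.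
    + intros s. apply (lt_ext_le _ (Hcnt s)), nsign_cons_le.
    + exists (gprod (map (gmul (a e)) ds) ** a e :: wt ++ u). split.
      * constructor; [apply run_letter; [exact Hds | apply (lt_ext_le _ Hrun); lia]|].
        apply (alt_word_app Hwt). rewrite negb_involutive. exact Hu.
      * simpl in Hgu |- *. rewrite gprod_app, Hgu, mul1g. unfold wprod. simpl.
        rewrite !mulgA. reflexivity.
  - destruct (IH (ds ++ [c])) as (u & Hu & Hgu).
    + intros d Hd. apply in_app_or in Hd. destruct Hd as [Hd | [<- | []]]; auto.
    + rewrite length_app. simpl. rewrite <- Nat.add_assoc. exact Hrun.
    + intros s. apply (lt_ext_le _ (Hcnt s)), nsign_cons_le.
    + exists u. split; [exact Hu|]. rewrite Hgu, map_app, gprod_app.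
      unfold wprod. simpl. rewrite mulg1, !mulgA. reflexivity.
Qed.

Variables (E : nat -> bool) (J : nat -> G).
Hypothesis HJ : forall i, C (J i) \/ alt_elt (negb X) (J i).
Hypothesis HEJ : forall i, E i <> E (S i) -> alt_elt (negb X) (J i).

Lemma chain_window m len :
  alt_elt (negb X) (J (m + len)) -> chain (E m) (window E J m (S len)).
Proof.
  revert m. induction len as [|len IH]; intros m Hend.
  - rewrite Nat.add_0_r in Hend. constructor. exact Hend.
  - change (window E J m (S (S len))) with ((E m, J m) :: window E J (S m) (S len)).
    rewrite <- Nat.add_succ_comm in Hend. specialize (IH (S m) Hend).
    destruct (HJ m) as [HC | Halt]; [|exact (chain_cut _ Halt IH)].
    destruct (bool_dec (E m) (E (S m))) as [Heq | Hne].
    + apply chain_merge; [exact HC|]. rewrite Heq. exact IH.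
    + exact (chain_cut _ (HEJ Hne) IH).
Qed.

Lemma cyclic_wprod_long_junction_neq1 k j : j < k -> alt_elt (negb X) (J j) ->
  (forall i, E (i + k) = E i) -> (forall i, J (i + k) = J i) ->
  (forall s, lt_ext (nsign s (window E J 0 k)) n) ->
  wprod a (window E J 0 k) <> gone.
Proof.
  intros Hj Halt HEk HJk Hcnt.
  destruct (window_rot E J HEk HJk (j := S j)) as (w1 & w2 & Hw & Hrot); [lia|].
  assert (Hchain : chain (E (S j)) (window E J (S j) k)).
  { replace k with (S (k - 1)) by lia. apply chain_window.
    replace (S j + (k - 1)) with (j + k) by lia. rewrite HJk. exact Halt. }
  assert (Hcnt' : forall s, lt_ext (nsign s (window E J (S j) k)) n).
  { intros s. rewrite Hrot, nsign_app, Nat.add_comm, <- nsign_app, <- Hw. apply Hcnt. }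
  destruct (chain_alt_word [] Hchain) as (u & Hu & Hgu);
    [simpl; tauto | apply Hcnt' | exact Hcnt'|].
  rewrite Hw, wprod_app. intros H1. apply (alt_word_neq1 Hu).
  rewrite Hgu, Hrot, wprod_app. simpl. rewrite mul1g. apply mulg_eq1C, H1.
Qed.

Lemma cyclic_wprod_short_junctions_neq1 k : 0 < k ->
  (forall j, j < k -> ~ alt_elt (negb X) (J j)) ->
  (forall s, lt_ext (nsign s (window E J 0 k)) n) ->
  wprod a (window E J 0 k) <> gone.
Proof.
  intros Hk Hshort Hcnt.
  assert (HC : forall i, i < k -> C (J i)).
  { intros i Hi. destruct (HJ i) as [HC | Halt]; [exact HC|]. exfalso. exact (Hshort i Hi Halt). }
  assert (Hconst : forall i, i < k -> E i = E 0).
  { induction i as [|i IH]; intros Hi; [reflexivity|]. rewrite <- IH by lia.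
    destruct (bool_dec (E i) (E (S i))) as [Heq | Hne]; [symmetry; exact Heq|].
    exfalso. apply (Hshort i); [lia | apply HEJ, Hne]. }
  assert (Hwin : window E J 0 k = map (fun i => (E 0, J i)) (seq 0 k)).
  { apply map_ext_in. intros i Hi. apply in_seq in Hi. rewrite Hconst by lia. reflexivity. }
  destruct (Hrtf (E 0)) as [_ Hword].
  rewrite Hwin. unfold wprod. rewrite map_map, <- (map_map J (gmul (a (E 0)))), <- rtf_fold.
  apply Hword.
  - rewrite length_map, length_seq. exact Hk.
  - rewrite length_map, length_seq, <- (length_seq k 0), <- (nsign_const (E 0) J), <- Hwin.
    apply Hcnt.
  - intros d Hd. apply in_map_iff in Hd. destruct Hd as (i & <- & Hi).
    apply in_seq in Hi. apply HC. lia.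
Qed.

Lemma cyclic_wprod_neq1 k : 0 < k ->
  (forall i, E (i + k) = E i) -> (forall i, J (i + k) = J i) ->
  (forall s, lt_ext (nsign s (window E J 0 k)) n) ->
  wprod a (window E J 0 k) <> gone.
Proof.
  intros Hk HEk HJk Hcnt.
  destruct (classic (exists j, j < k /\ alt_elt (negb X) (J j))) as [(j & Hj & Halt) | Hnone].
  - exact (cyclic_wprod_long_junction_neq1 Hj Halt HEk HJk Hcnt).
  - apply (cyclic_wprod_short_junctions_neq1 Hk); [|exact Hcnt].
    intros j Hj Halt. apply Hnone. exists j. auto.
Qed.

End CyclicProducts.
End Amalgam.

Lemma even_mirror r i : i <= 2 * r -> Nat.even (2 * r - i) = Nat.even i.
Proof.
  intros Hi. rewrite Nat.even_sub, Nat.even_even by exact Hi.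
  destruct (Nat.even i); reflexivity.
Qed.

Section ReducedWord.
Context {G : group}.
Variables (A B C : G -> Prop) (r : nat) (x : nat -> G).
Hypothesis HG : amalgamated_free_product A B C.
Hypothesis Hx : forall i, i <= 2 * r -> letter A B C (Nat.even i) (x i).

Definition word : G := gprod (map x (seq 0 (S (2 * r)))).

Definition left_letters (e : bool) : nat -> G :=
  if e then x else fun i => ginv (x (2 * r - i)).
Definition right_letters (e : bool) : nat -> G :=
  if e then fun i => x (2 * r - i) else fun i => ginv (x i).

Lemma gpow_sign_word e :
  gpow_sign word e = rprod (left_letters e) r ** gpow_sign (x r) e ** lprod (right_letters e) r.
Proof.
  assert (Hword : word = rprod x r ** x r ** lprod (fun i => x (2 * r - i)) r).
  { unfold word. replace (S (2 * r)) with (r + S r) by lia.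
    rewrite seq_app, map_app, gprod_app, gprod_map_seq0. simpl.
    rewrite gprod_map_seqS, mulgA. replace (r + r) with (2 * r) by lia. reflexivity. }
  rewrite Hword. destruct e; simpl; [reflexivity|].
  rewrite !invMg, invg_lprod, invg_rprod, mulgA. reflexivity.
Qed.

Lemma half_letters e i : i <= r ->
  letter A B C (Nat.even i) (left_letters e i) /\ letter A B C (Nat.even i) (right_letters e i).
Proof.
  intros Hi.
  assert (Hxi : letter A B C (Nat.even i) (x i)) by (apply Hx; lia).
  assert (Hmirror : letter A B C (Nat.even i) (x (2 * r - i)))
    by (rewrite <- (@even_mirror r i) by lia; apply Hx; lia).
  destruct e; simpl; split; try apply (letter_inv HG); assumption.
Qed.

(* What sits between [x_r^e] and [x_r^e'] once [... word^e b word^e' ...] is telescoped. *)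
Definition junction (e e' : bool) (b : G) : G :=
  sandwich (right_letters e) (left_letters e') b r.

Lemma junction_C_or_alt e e' b : B b ->
  C (junction e e' b) \/ alt_elt A B C (Nat.odd r) (junction e e' b).
Proof.
  intros Hb. apply (sandwich_C_or_alt HG); [exact Hb|]. intros i Hi. split; apply half_letters; lia.
Qed.

Lemma junction_alt e e' b : 0 < r ->
  n_RF (Some 2) C (x 0) -> n_RF (Some 2) C (x (2 * r)) -> e <> e' -> B b -> b <> gone ->
  alt_elt A B C (Nat.odd r) (junction e e' b).
Proof.
  intros Hr Hx0 Hx2r He Hb Hb1. apply (sandwich_alt HG); auto.
  - intros c Hc Hc1. destruct e, e'; try congruence; simpl.
    + rewrite Nat.sub_0_r. exact (n_RF2_conj_notin (C_subgroup HG) true Hx2r Hc Hc1).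
    + exact (n_RF2_conj_notin (C_subgroup HG) false Hx0 Hc Hc1).
  - intros i Hi. split; apply half_letters; lia.
Qed.

Lemma rf_word_junctions (l : list (bool * G)) :
  rf_word word l = gone ->
  wprod (gpow_sign (x r))
    (window (cyc_sign l) (fun i => junction (cyc_sign l i) (cyc_sign l (S i)) (cyc_elt l i))
       0 (length l)) = gone.
Proof.
  intros Hl. rewrite rf_wordE, <- (window_cyc l), wprod_window in Hl. rewrite wprod_window.
  set (E := cyc_sign l) in *.
  apply (mulgI (rprod (left_letters (E 0)) r)). rewrite mulg1.
  rewrite <- (gprod_telescope (fun i => rprod (left_letters (E i)) r)
    (fun i => gpow_sign (x r) (E i) ** lprod (right_letters (E i)) r ** cyc_elt l i)
    (fun i => gpow_sign word (E i) ** cyc_elt l i) _ 0 (length l)).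
  - rewrite Hl, mul1g. unfold E. rewrite cyc_sign_periodic. reflexivity.
  - intros i. rewrite gpow_sign_word, !mulgA. reflexivity.
  - intros i. unfold junction, sandwich. rewrite !mulgA. reflexivity.
Qed.

Lemma rf_words_word_neq1 n : 0 < r ->
  n_RF (Some 2) C (x 0) -> n_RF (Some 2) C (x (2 * r)) -> n_RTF n C (x r) ->
  forall l : list (bool * G),
    1 <= length l ->
    (forall i, i < length l -> B (snd (nth i l (true, gone)))) ->
    (forall i, i < length l ->
        fst (nth i l (true, gone)) = negb (fst (nth ((S i) mod length l) l (true, gone))) ->
        snd (nth i l (true, gone)) <> gone) ->
    lt_ext (length (filter (fun p => fst p) l)) n ->
    lt_ext (length (filter (fun p => negb (fst p)) l)) n ->
    rf_word word l <> gone.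
Proof.
  intros Hr Hx0 Hx2r Hxr l Hlen HBl Hne Hpos Hneg Hw.
  assert (Hl : l <> []) by (intros ->; simpl in Hlen; lia).
  apply rf_word_junctions in Hw.
  refine (cyclic_wprod_neq1 HG (Nat.even r) (gpow_sign (x r)) _ _ _ _ _ _ _ _ _ _ Hw).
  - assert (Hmid : letter A B C (Nat.even r) (x r)) by (apply Hx; lia).
    intros []; [|apply (factor_inv HG)]; apply Hmid.
  - intros []; [exact Hxr | exact (n_RTF_inv (C_subgroup HG) Hxr)].
  - intros i. rewrite Nat.negb_even. apply junction_C_or_alt, (cyc_elt_in _ Hl HBl).
  - intros i Hi. rewrite Nat.negb_even. apply junction_alt; auto.
    + apply (cyc_elt_in _ Hl HBl).
    + apply (cyc_elt_neq1 Hl Hne i Hi).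
  - lia.
  - apply cyc_sign_periodic.
  - intros i. rewrite cyc_elt_periodic, cyc_sign_periodic.
    change (S (i + length l)) with (S i + length l). rewrite cyc_sign_periodic. reflexivity.
  - intros s. rewrite (nsign_window s _ _ (cyc_elt l)), window_cyc. destruct s; assumption.
Qed.

End ReducedWord.

Theorem lemma5p25 (G : group) (A B C : G -> Prop) (r : nat) (x : nat -> G)
  (n : option nat) :
  amalgamated_free_product A B C ->
  1 <= r ->
  (forall i, i <= 2 * r -> Nat.Even i -> A (x i) /\ ~ C (x i)) ->
  (forall i, i <= 2 * r -> Nat.Odd i -> B (x i) /\ ~ C (x i)) ->
  n_RF (Some 2) C (x 0) ->
  n_RF (Some 2) C (x (2 * r)) ->
  le_ext 2 n ->
  n_RTF n C (x r) ->
  let g := gprod (map x (seq 0 (S (2 * r)))) in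
  ~ B g /\ n_RF n B g.
Proof.
  intros HG Hr HA HB Hx0 Hx2r Hn Hxr g.
  assert (Hx : forall i, i <= 2 * r -> letter A B C (Nat.even i) (x i)).
  { intros i Hi. destruct (Nat.Even_or_Odd i) as [He | Ho].
    - rewrite (proj2 (Nat.even_spec i) He). apply HA; assumption.
    - rewrite <- Nat.negb_odd, (proj2 (Nat.odd_spec i) Ho). apply HB; assumption. }
  pose proof (@rf_words_word_neq1 G A B C r x HG Hx n Hr Hx0 Hx2r Hxr) as Hwords.
  assert (HgB : ~ B g) by exact (rf_words_notin (proj1 (proj2 HG)) n g Hn Hwords).
  split; [exact HgB | split; [exact HgB | exact Hwords]].
Qed.
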